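(* Let $\mathcal{B}$ be a $\sigma$-algebra on a nonempty set $E$, and let $\nu$ be a maxitive measure on $\mathcal{B}$ having a $\mathcal{B}$-measurable cardinal density $c:E\to[0,\infty]$, i.e. $\nu(B)=\sup_{x\in B}c(x)$ for all $B\in\mathcal{B}$. Then for every maxitive measure $\tau$ on $\mathcal{B}$, $\nu\ll\tau$ if and only if $\nu\lll\tau$. In particular $\nu$ is autocontinuous, i.e. $\nu\lll\nu$.
   Context: A maxitive measure on $\mathcal{B}$ is a map $\nu:\mathcal{B}\to[0,\infty]$ with $\nu(\emptyset)=0$ and $\nu(B\cup B')=\max(\nu(B),\nu(B'))$ for all $B,B'\in\mathcal{B}$. A map $f:E\to[0,\infty]$ is $\mathcal{B}$-measurable if $\{f>t\}\in\mathcal{B}$ for all $t\geq 0$. For a maxitive measure $\tau$, a subset $N\subset E$ is $\tau$-negligible if $N\subset G$ for some $G\in\mathcal{B}$ with $\tau(G)=0$. The $\tau$-essential supremum of $f$ on $B$ is $\bigoplus^{\tau}_{x\in B}f(x)=\inf\{t>0: B\cap\{f>t\}\text{ is }\tau\text{-negligible}\}$ (with $\inf\emptyset=\infty$). We write $\nu\ll\tau$ if $\tau(B)=0$ implies $\nu(B)=0$ for all $B\in\mathcal{B}$, and $\nu\lll\tau$ if there exists a $\mathcal{B}$-measurable $f:E\to[0,\infty]$ (a relative density) with $\nu(B)=\bigoplus^{\tau}_{x\in B}f(x)$ for all $B\in\mathcal{B}$. *)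

From mathcomp Require Import all_boot all_order all_algebra.
From mathcomp Require Import all_classical all_reals all_analysis.
Set Implicit Arguments. Unset Strict Implicit. Unset Printing Implicit Defensive.
Import Order.TTheory GRing.Theory Num.Theory.
Local Open Scope classical_set_scope.
Local Open Scope ring_scope.
Local Open Scope ereal_scope.

(* The sigma-algebra B on E is the one of a measurableType E. *)

Definition maxitive {d} {E : measurableType d} {R : realType}
  (nu : set E -> \bar R) : Prop :=
  nu set0 = 0 /\
  (forall B, measurable B -> 0 <= nu B) /\
  (forall B B', measurable B -> measurable B' ->
     nu (B `|` B') = maxe (nu B) (nu B')).

Definition Bmeasurable {d} {E : measurableType d} {R : realType}
  (f : E -> \bar R) : Prop :=
  (forall x, 0 <= f x) /\
  (forall t : R, (0 <= t)%R -> measurable [set x | (t%:E < f x)%E]).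

Definition negligible {d} {E : measurableType d} {R : realType}
  (tau : set E -> \bar R) (N : set E) : Prop :=
  exists G, measurable G /\ tau G = 0 /\ N `<=` G.

(* tau-essential supremum of f on B (inf of the empty set is +oo) *)
Definition ess_sup_on {d} {E : measurableType d} {R : realType}
  (tau : set E -> \bar R) (f : E -> \bar R) (B : set E) : \bar R :=
  ereal_inf [set t%:E | t in [set t : R |
     (0 < t)%R /\ negligible tau (B `&` [set x | (t%:E < f x)%E])]].

(* supremum of f over B in [0,oo] (so the supremum over the empty set is 0) *)
Definition sup_on {d} {E : measurableType d} {R : realType}
  (f : E -> \bar R) (B : set E) : \bar R :=
  ereal_sup ([set 0] `|` (f @` B)).

Definition abs_cont {d} {E : measurableType d} {R : realType}
  (nu tau : set E -> \bar R) : Prop :=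
  forall B, measurable B -> tau B = 0 -> nu B = 0.

Definition has_rel_density {d} {E : measurableType d} {R : realType}
  (nu tau : set E -> \bar R) : Prop :=
  exists f : E -> \bar R, Bmeasurable f /\
    forall B, measurable B -> nu B = ess_sup_on tau f B.

From mathcomp Require Import all_boot all_order all_algebra.
From mathcomp Require Import all_classical all_reals all_analysis.
Import Order.TTheory GRing.Theory Num.Theory.
Local Open Scope classical_set_scope.
Local Open Scope ereal_scope.

(* A relative density never charges a tau-null set, so nu <<< tau always gives
   nu << tau.  Conversely, if nu << tau then the cardinal density c is itself a
   relative density: a value c x > t at a point x of a tau-null set G would give
   nu G >= c x > 0, so discarding tau-null sets does not lower the supremum of c,
   while the essential supremum never exceeds the plain one. *)

Section essential_supremum.
Context {d : measure_display} {E : measurableType d} {R : realType}.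
Variable tau : set E -> \bar R.

Lemma ess_sup_on_ge0 (f : E -> \bar R) (B : set E) : 0 <= ess_sup_on tau f B.
Proof.
by apply: le_ereal_inf_tmp => _ [t [t0 _] <-]; rewrite lee_fin ltW.
Qed.

Lemma ess_sup_on_negligible (f : E -> \bar R) (B : set E) :
  negligible tau B -> ess_sup_on tau f B = 0.
Proof.
move=> [G [mG tG BG]]; apply/eqP; rewrite eq_le ess_sup_on_ge0 andbT.
apply/lee_addgt0Pr => e e0; rewrite add0e.
apply: ereal_inf_lbound; exists e => //; split => //.
by exists G; split => //; split => // x [/BG].
Qed.

Lemma ess_sup_on_le_sup_on (f : E -> \bar R) (B : set E) :
  tau set0 = 0 -> ess_sup_on tau f B <= sup_on f B.
Proof.
move=> tau0.
have f_le x : B x -> f x <= sup_on f B.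
  by move=> Bx; apply: ereal_sup_ubound; right; exists x.
have : 0 <= sup_on f B by apply: ereal_sup_ubound; left.
move: f_le; case: (sup_on f B) => [r| |] // f_le r0; last by rewrite leey.
apply/lee_addgt0Pr => e e0; apply: ereal_inf_lbound; exists (r + e)%R => //.
split; first by rewrite lee_fin in r0; apply: (le_lt_trans r0); rewrite ltrDl.
exists set0; split => //; split => // x [Bx fx].
by move: (f_le x Bx) => /(lt_le_trans fx); rewrite lte_fin ltNge lerDl ltW.
Qed.

Lemma sup_on_le_ess_sup_on (f : E -> \bar R) (B : set E) :
  (forall G, measurable G -> tau G = 0 -> sup_on f G = 0) ->
  sup_on f B <= ess_sup_on tau f B.
Proof.
move=> fnull; apply: le_ereal_inf_tmp => _ [t [t0 [G [mG [tG BG]]]] <-].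
apply: ge_ereal_sup => _ [->|[x Bx <-]]; first by rewrite lee_fin ltW.
rewrite leNgt; apply/negP => ftx.
have : f x <= sup_on f G.
  by apply: ereal_sup_ubound; right; exists x => //; apply: BG.
by rewrite fnull // => /(lt_le_trans ftx); rewrite lte_fin ltNge ltW.
Qed.

End essential_supremum.

Lemma rel_density_abs_cont {d : measure_display} {E : measurableType d}
    {R : realType} (nu tau : set E -> \bar R) :
  has_rel_density nu tau -> abs_cont nu tau.
Proof.
move=> [f [_ nuf]] B mB tB; rewrite nuf //.
by apply: ess_sup_on_negligible; exists B; split.
Qed.

Lemma abs_cont_cardinal_density {d : measure_display} {E : measurableType d}
    {R : realType} (nu tau : set E -> \bar R) (c : E -> \bar R) :
  maxitive tau -> (forall B, measurable B -> nu B = sup_on c B) ->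
  abs_cont nu tau -> forall B, measurable B -> nu B = ess_sup_on tau c B.
Proof.
move=> [tau0 _] nuc nu_tau B mB; apply/eqP; rewrite eq_le nuc //.
rewrite ess_sup_on_le_sup_on // andbT.
by apply: sup_on_le_ess_sup_on => G mG tG; rewrite -nuc //; apply: nu_tau.
Qed.

Theorem proposition3p2 (d : measure_display) (E : measurableType d)
  (R : realType) (x0 : E) (nu : set E -> \bar R) (c : E -> \bar R) :
  maxitive nu ->
  Bmeasurable c ->
  (forall B, measurable B -> nu B = sup_on c B) ->
  (forall tau : set E -> \bar R, maxitive tau ->
     (abs_cont nu tau <-> has_rel_density nu tau))
  /\ has_rel_density nu nu.
Proof.
move=> max_nu mc nuc.
have equiv tau : maxitive tau -> abs_cont nu tau <-> has_rel_density nu tau.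
  move=> max_tau; split; last exact: rel_density_abs_cont.
  by move=> nu_tau; exists c; split => //; apply: abs_cont_cardinal_density.
by split => //; apply/(equiv _ max_nu).
Qed.
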